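(* Let $\mathbb{K}$ be a field of characteristic zero, let $t,s\in\mathbb{K}\setminus\{0,1\}$, and let $\mathfrak{g}$ be a finite-dimensional non-perfect Lie algebra over $\mathbb{K}$ (i.e. $\mathfrak{g}^{(2)}\neq\mathfrak{g}$). Then $\mathcal{D}(t,1,0)(\mathfrak{g})$ and $\mathcal{D}(s,1,0)(\mathfrak{g})$ are isomorphic vector spaces.
   Context: For a Lie algebra $\mathfrak{g}=(V,\mu)$, the derived algebra $\mathfrak{g}^{(2)}$ is the linear span of all products $\mu(X,Y)$. For $t\in\mathbb{K}$, $\mathcal{D}(t,1,0)(\mathfrak{g})$ denotes the space of $(t,1,0)$-derivations of $\mathfrak{g}$: linear maps $D:V\to V$ with $tD\mu(X,Y)=\mu(DX,Y)$ for all $X,Y\in V$. *)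

From HB Require Import structures.
From mathcomp Require Import all_boot all_order all_algebra.
Set Implicit Arguments. Unset Strict Implicit. Unset Printing Implicit Defensive.
Import GRing.Theory.
Local Open Scope ring_scope.

Definition is_lie_bracket (K : fieldType) (V : vectType K) (mu : V -> V -> V) : Prop :=
  [/\ (forall X (a : K) Y Z, mu X (a *: Y + Z) = a *: mu X Y + mu X Z),
      (forall Y (a : K) X Z, mu (a *: X + Z) Y = a *: mu X Y + mu Z Y),
      (forall X, mu X X = 0) &
      (forall X Y Z, mu X (mu Y Z) + mu Y (mu Z X) + mu Z (mu X Y) = 0)].

(* membership in the derived algebra g^(2) = span of all products mu X Y *)
Definition in_derived (K : fieldType) (V : vectType K) (mu : V -> V -> V) (v : V) : Prop :=
  exists s : seq (V * V), v = \sum_(p <- s) mu p.1 p.2.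

Definition non_perfect (K : fieldType) (V : vectType K) (mu : V -> V -> V) : Prop :=
  exists v : V, ~ in_derived mu v.

Definition is_t10_derivation (K : fieldType) (V : vectType K) (mu : V -> V -> V)
    (t : K) (D : 'End(V)) : Prop :=
  forall X Y, t *: D (mu X Y) = mu (D X) Y.

Definition iso_subspaces (K : fieldType) (W : lmodType K) (P Q : W -> Prop) : Prop :=
  exists (f g : W -> W),
    (forall x y, P x -> P y -> f (x + y) = f x + f y) /\
    (forall (a : K) x, P x -> f (a *: x) = a *: f x) /\
    (forall x, P x -> Q (f x)) /\
    (forall y, Q y -> P (g y)) /\
    (forall x, P x -> g (f x) = x) /\
    (forall y, Q y -> f (g y) = y).

(* A (t,1,0)-derivation D with t <> 0, 1 annihilates [g,[g,g]]: applying D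
   to the Jacobi identity gives a cyclic sum of zero, while the Jacobi
   identity at (DX, Y, Z) gives the same terms weighted by t and t^2, so
   t(1 - t) D[X,[Y,Z]] = 0.  Hence D maps g^(2) into the centre.  Let P be a
   projection onto g^(2) and M_a the map equal to a on g^(2) and to the
   identity on ker P.  Then D |-> D M_(t/s) sends (t,1,0)-derivations to
   (s,1,0)-derivations: on brackets it rescales by t/s, and on arguments it
   only changes D X by a central element.  Since M_a M_b = M_(ab), D |-> D M_(s/t)
   is its inverse. *)

From HB Require Import structures.
From mathcomp Require Import all_boot all_order all_algebra.
From mathcomp Require Import ring.

Set Implicit Arguments.
Unset Strict Implicit.
Unset Printing Implicit Defensive.
Import GRing.Theory.
Local Open Scope ring_scope.

Section VectorSpace.
Variables (K : fieldType) (V : vectType K).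

Lemma span_ind (P : V -> Prop) (X : seq V) :
  P 0 -> (forall a u v, P u -> P v -> P (a *: u + v)) -> {in X, forall x, P x} ->
  {in <<X>>%VS, forall v, P v}.
Proof.
move=> P0 PL PX v /(@coord_span _ _ _ (in_tuple X)) ->.
apply: big_ind => [//|u w Pu Pw|i _]; first by rewrite -[u]scale1r; apply: PL.
by rewrite -[_ *: _]addr0; apply/PL/P0/PX/mem_nth.
Qed.

Variable U : {vspace V}.

Definition dilation (a : K) : 'End(V) := (\1 + (a - 1) *: projv U)%VF.

Lemma dilationE a v : dilation a v = v + (a - 1) *: projv U v.
Proof. by rewrite !(add_lfunE, scale_lfunE, id_lfunE). Qed.

Lemma dilation_id a v : v \in U -> dilation a v = a *: v.
Proof.
by move=> Uv; rewrite dilationE projv_id // -{1}[v]scale1r -scalerDl addrC subrK.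
Qed.

Lemma dilationM a b : (dilation a \o dilation b)%VF = dilation (a * b).
Proof.
apply/lfunP => v; rewrite comp_lfunE !dilationE linearD linearZ /=.
rewrite (projv_id (memv_proj U v)) scalerDr scalerA -!addrA -!scalerDl.
by congr (_ + _ *: _); ring.
Qed.

Lemma dilation1 : dilation 1 = \1%VF.
Proof. by apply/lfunP => v; rewrite dilationE subrr scale0r addr0 id_lfunE. Qed.

End VectorSpace.

Section LieBracket.
Variables (K : fieldType) (V : vectType K) (mu : V -> V -> V).
Hypothesis lie_mu : is_lie_bracket mu.

Lemma lieDr X Y Z : mu X (Y + Z) = mu X Y + mu X Z.
Proof.
case: (lie_mu : [/\ _, _, _ & _]) => linr _ _ _.
by rewrite -[Y]scale1r linr !scale1r.
Qed.

Lemma lieDl X Y Z : mu (Y + Z) X = mu Y X + mu Z X.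
Proof.
case: (lie_mu : [/\ _, _, _ & _]) => _ linl _ _.
by rewrite -[Y]scale1r linl !scale1r.
Qed.

Lemma lie0r X : mu X 0 = 0.
Proof. by apply: (addrI (mu X 0)); rewrite addr0 -lieDr addr0. Qed.

Lemma lie0l X : mu 0 X = 0.
Proof. by apply: (addrI (mu 0 X)); rewrite addr0 -lieDl addr0. Qed.

Lemma lieZr X a Y : mu X (a *: Y) = a *: mu X Y.
Proof.
case: (lie_mu : [/\ _, _, _ & _]) => linr _ _ _.
by rewrite -[a *: Y]addr0 linr lie0r addr0.
Qed.

Lemma lieZl X a Y : mu (a *: Y) X = a *: mu Y X.
Proof.
case: (lie_mu : [/\ _, _, _ & _]) => _ linl _ _.
by rewrite -[a *: Y]addr0 linl lie0l addr0.
Qed.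

Lemma lie_anticomm X Y : mu X Y = - mu Y X.
Proof.
case: (lie_mu : [/\ _, _, _ & _]) => _ _ alt _; apply/eqP; rewrite -addr_eq0.
by have := alt (X + Y); rewrite lieDl !lieDr !alt add0r addr0 addrC => ->.
Qed.

Lemma lie_suml I (r : seq I) (F : I -> V) Y :
  mu (\sum_(i <- r) F i) Y = \sum_(i <- r) mu (F i) Y.
Proof. exact: (big_morph (mu^~ Y) (fun a b => lieDl Y a b) (lie0l Y)). Qed.

Lemma lie_sumr I (r : seq I) (F : I -> V) Y :
  mu Y (\sum_(i <- r) F i) = \sum_(i <- r) mu Y (F i).
Proof. exact: (big_morph (mu Y) (lieDr Y) (lie0r Y)). Qed.

Definition derived_space : {vspace V} :=
  <<[seq mu x y | x <- vbasis {:V}, y <- vbasis {:V}]>>%VS.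

Lemma lie_in_derived_space X Y : mu X Y \in derived_space.
Proof.
rewrite (coord_vbasis (memvf X)) (coord_vbasis (memvf Y)) lie_suml.
apply: memv_suml => i _; rewrite lieZl lie_sumr; apply/memvZ/memv_suml => j _.
by rewrite lieZr; apply/memvZ/memv_span/allpairs_f; apply: mem_nth; rewrite size_tuple.
Qed.

Section T10Derivation.
Variables (t : K) (D : 'End(V)).
Hypotheses (t_neq0 : t != 0) (t_neq1 : t != 1) (D_t10 : is_t10_derivation mu t D).

Lemma t10_derivation_bracketr X Y : mu X (D Y) = t *: D (mu X Y).
Proof. by rewrite lie_anticomm -D_t10 -scalerN -linearN -lie_anticomm. Qed.

Lemma t10_derivation_double_bracket X Y Z : D (mu X (mu Y Z)) = 0.
Proof.
case: (lie_mu : [/\ _, _, _ & _]) => _ _ _ jacobi.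
pose E X Y Z := D (mu X (mu Y Z)).
have cyclic_sum : E X Y Z + E Y Z X + E Z X Y = 0.
  by rewrite /E -!linearD jacobi linear0.
have weighted_sum : t *: E X Y Z + t ^+ 2 *: (E Y Z X + E Z X Y) = 0.
  have := jacobi (D X) Y Z.
  rewrite t10_derivation_bracketr lieZr t10_derivation_bracketr -!D_t10.
  by rewrite lieZr t10_derivation_bracketr !scalerA -expr2 scalerDr addrA.
have : (t - t ^+ 2) *: E X Y Z = 0.
  move: weighted_sum; rewrite -addrA in cyclic_sum.
  by rewrite -(addr0_eq cyclic_sum) scalerN scalerBl.
apply: contra_eq => EXYZ_neq0.
rewrite scaler_eq0 (negPf EXYZ_neq0) orbF -{1}[t]mulr1 expr2 -mulrBr.
by rewrite mulf_neq0 // subr_eq0 eq_sym.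
Qed.

Lemma t10_derivation_derived_central v Y :
  v \in derived_space -> mu (D v) Y = 0.
Proof.
move: v; apply: span_ind => [|a u w Du Dw|_ /allpairsP[[A B] [_ _ ->]]].
- by rewrite linear0 lie0l.
- by rewrite linearP lieDl lieZl Du Dw scaler0 addr0.
- rewrite -D_t10 (lie_anticomm (mu A B)) linearN /=.
  by rewrite t10_derivation_double_bracket oppr0 scaler0.
Qed.

Lemma t10_derivation_comp_dilation s : s != 0 ->
  is_t10_derivation mu s (D \o dilation derived_space (t / s))%VF.
Proof.
move=> s_neq0 X Y; rewrite !comp_lfunE dilation_id ?lie_in_derived_space //.
rewrite dilationE linearD !linearZ /= lieDl lieZl.
by rewrite (t10_derivation_derived_central Y (memv_proj _ X)) scaler0 addr0 scalerA divfK.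
Qed.

End T10Derivation.
End LieBracket.

Theorem theorem3p5 (K : fieldType) (V : vectType K) (mu : V -> V -> V) (t s : K) :
  [pchar K] =i pred0 ->
  t != 0 -> t != 1 -> s != 0 -> s != 1 ->
  is_lie_bracket mu ->
  non_perfect mu ->
  iso_subspaces (is_t10_derivation mu t) (is_t10_derivation mu s).
Proof.
move=> _ t_neq0 t_neq1 s_neq0 s_neq1 lie_mu _.
pose M a := dilation (derived_space mu) a.
have M_inv a b : a != 0 -> b != 0 -> (M (a / b) \o M (b / a))%VF = \1%VF.
  by move=> a0 b0; rewrite dilationM mulrA divfK // divff // dilation1.
exists (fun D => D \o M (t / s))%VF, (fun D => D \o M (s / t))%VF.
split; [by move=> D E _ _; rewrite comp_lfunDl|].
split; [by move=> a D _; rewrite comp_lfunZl|].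
split; [by move=> D /(t10_derivation_comp_dilation lie_mu t_neq0 t_neq1); apply|].
split; [by move=> D /(t10_derivation_comp_dilation lie_mu s_neq0 s_neq1); apply|].
by split=> D _; rewrite -comp_lfunA M_inv // comp_lfun1r.
Qed.
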